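(* Let $X$ be a topological space and $(Y,d)$ a metric space. Then the family $$\mathcal{B}=\{B_K(f,\epsilon): f\in C_{od}^\star(X,Y),\ K \text{ a nonempty compact subset of } \mathrm{dom}(f),\ \epsilon>0\}\cup\{C_{od}(X,Y)\}$$ is a basis for a topology on $C_{od}(X,Y)$.
   Context: $C_{od}(X,Y)$ is the set of continuous functions $f:\mathrm{dom}(f)\to Y$ whose domain $\mathrm{dom}(f)$ is an open subset of $X$ (including the empty function $\emptyset$), and $C_{od}^\star(X,Y)=C_{od}(X,Y)\setminus\{\emptyset\}$. For $f,g$ and a nonempty compact $K\subseteq\mathrm{dom}(f)\cap\mathrm{dom}(g)$, $d_K(f,g)=\sup_{x\in K}d(f(x),g(x))$. For $f\in C_{od}^\star(X,Y)$, $K$ a nonempty compact subset of $\mathrm{dom}(f)$ and $\epsilon>0$, $B_K(f,\epsilon)=\{g\in C_{od}^\star(X,Y): K\subseteq\mathrm{dom}(g)\text{ and } d_K(f,g)<\epsilon\}$. *)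

From HB Require Import structures.
From mathcomp Require Import all_boot all_order all_algebra.
From mathcomp Require Import all_classical all_reals topology.
Set Implicit Arguments. Unset Strict Implicit. Unset Printing Implicit Defensive.
Import Order.TTheory GRing.Theory Num.Theory.
Local Open Scope classical_set_scope.
Local Open Scope ring_scope.

(* A partial function X -> Y is encoded as f : X -> option Y;
   its domain is the set of points where it is defined. *)
Definition pdom (X Y : Type) (f : X -> option Y) : set X :=
  [set x | exists y, f x = Some y].

Definition is_metric (R : realType) (Y : Type) (d : Y -> Y -> R) : Prop :=
  [/\ forall a b, 0 <= d a b,
      forall a b, d a b = 0 <-> a = b,
      forall a b, d a b = d b a &
      forall a b c, d a c <= d a b + d b c].

Definition is_cod (R : realType) (X : topologicalType) (Y : Type)
    (d : Y -> Y -> R) (f : X -> option Y) : Prop :=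
  open (pdom f) /\
  forall x y, f x = Some y -> forall e : R, 0 < e ->
    \forall z \near x, exists2 w, f z = Some w & d y w < e.

Definition Cod (R : realType) (X : topologicalType) (Y : Type)
    (d : Y -> Y -> R) : set (X -> option Y) := [set f | is_cod d f].

Definition Cod_star (R : realType) (X : topologicalType) (Y : Type)
    (d : Y -> Y -> R) : set (X -> option Y) :=
  [set f | is_cod d f /\ (pdom f !=set0)].

Definition dK (R : realType) (X : topologicalType) (Y : Type)
    (d : Y -> Y -> R) (K : set X) (f g : X -> option Y) : R :=
  sup [set r : R | exists x, exists a, exists b,
         [/\ K x, f x = Some a, g x = Some b & r = d a b]].

Definition BK (R : realType) (X : topologicalType) (Y : Type)
    (d : Y -> Y -> R) (f : X -> option Y) (K : set X) (e : R)
    : set (X -> option Y) :=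
  [set g | Cod_star d g /\ K `<=` pdom g /\ dK d K f g < e].

Definition Bfam (R : realType) (X : topologicalType) (Y : Type)
    (d : Y -> Y -> R) : set (set (X -> option Y)) :=
  [set B | exists f K e, [/\ Cod_star d f, (K !=set0) /\ compact K,
                             K `<=` pdom f, 0 < e & B = BK d f K e]]
  `|` [set Cod d].

Definition is_basis_on (T : Type) (U : set T) (B : set (set T)) : Prop :=
  [/\ forall b, B b -> b `<=` U,
      (forall u, U u -> exists2 b, B b & b u) &
      forall b1 b2 u, B b1 -> B b2 -> b1 u -> b2 u ->
        exists2 b3, B b3 & b3 u /\ b3 `<=` b1 `&` b2].

From mathcomp Require Import all_boot all_order all_algebra.
From mathcomp Require Import all_classical all_reals topology.
From mathcomp Require Import lra.
Set Implicit Arguments.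
Unset Strict Implicit.
Unset Printing Implicit Defensive.
Import Order.TTheory GRing.Theory Num.Theory.
Local Open Scope classical_set_scope.
Local Open Scope ring_scope.

(* The suprema d_K(f, g) are finite: two continuous partial functions have
   locally bounded distance, hence bounded distance on a compact K.  They obey
   the triangle inequality and grow with K, so if u lies in B_K1(f1, e1) and in
   B_K2(f2, e2), the ball around u on K1 `|` K2 whose radius is the smaller of
   the gaps e_i - d_Ki(f_i, u) lies in both. *)

Section CompactOpenDistance.
Variables (R : realType) (X : topologicalType) (Y : Type) (d : Y -> Y -> R).
Hypothesis hd : is_metric d.
Implicit Types (f g u : X -> option Y) (K : set X) (B : set (X -> option Y)).

Let d_refl a : d a a = 0.
Proof. by case: hd => _ /(_ a a) [_ ->]. Qed.

Let d_sym a b : d a b = d b a.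
Proof. by case: hd. Qed.

Let d_triangle a b c : d a c <= d a b + d b c.
Proof. by case: hd. Qed.

Definition dK_values K f g : set R :=
  [set r | exists x a b, [/\ K x, f x = Some a, g x = Some b & r = d a b]].

Definition dist_le f g (M : R) (z : X) : Prop :=
  forall a b, f z = Some a -> g z = Some b -> d a b <= M.

Lemma cod_dist_locally_bounded f g x : is_cod d f -> is_cod d g ->
  pdom f x -> pdom g x -> \forall z \near x & n \near \oo, dist_le f g n%:R z.
Proof.
move=> [_ cf] [_ cg] [a0 fxa0] [b0 gxb0].
near=> z n => a b fza gzb.
have [w fzw a0w] : exists2 w, f z = Some w & d a0 w < 1.
  by near: z; exact: cf.
have [w' gzw' b0w'] : exists2 w, g z = Some w & d b0 w < 1.
  by near: z; exact: cg.
move: fza gzb; rewrite fzw gzw' => -[<-] [<-].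
have n_big : d a0 b0 + 2 <= n%:R by near: n; exact: nbhs_infty_ger.
have := d_triangle w a0 w'; have := d_triangle a0 b0 w'.
rewrite /= (d_sym w a0); lra.
Unshelve. all: by end_near.
Qed.

Lemma dK_values_ubound K f g : is_cod d f -> is_cod d g -> compact K ->
  K `<=` pdom f -> K `<=` pdom g -> has_ubound (dK_values K f g).
Proof.
move=> codf codg /compact_near_coveringP cK Kf Kg.
have near_bound : \forall n \near \oo, K `<=` dist_le f g n%:R.
  apply: (cK _ _ (fun n => dist_le f g n%:R)) => x Kx.
  exact: cod_dist_locally_bounded (Kf x Kx) (Kg x Kx).
near \oo => n.
have Kn : K `<=` dist_le f g n%:R by near: n.
by exists n%:R => _ [x [a [b [Kx fxa gxb ->]]]]; exact: Kn Kx _ _ fxa gxb.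
Unshelve. all: by end_near.
Qed.

Lemma le_dK K f g x a b : has_ubound (dK_values K f g) ->
  K x -> f x = Some a -> g x = Some b -> d a b <= dK d K f g.
Proof. by move=> ub Kx fxa gxb; apply: ub_le_sup => //; exists x, a, b. Qed.

Lemma dK_le K f g (r : R) : K !=set0 -> K `<=` pdom f -> K `<=` pdom g ->
  (forall x a b, K x -> f x = Some a -> g x = Some b -> d a b <= r) ->
  dK d K f g <= r.
Proof.
move=> [x Kx] Kf Kg le_r; apply: ge_sup.
  have [a fxa] := Kf x Kx; have [b gxb] := Kg x Kx.
  by exists (d a b), x, a, b.
by move=> _ [y [a [b [Ky fya gyb ->]]]]; exact: le_r Ky fya gyb.
Qed.

Lemma dK_id K u : K !=set0 -> K `<=` pdom u -> dK d K u u = 0.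
Proof.
move=> [x Kx] Ku; rewrite /dK -[RHS]sup1; congr sup.
apply/seteqP; split => [_ [y [a [b [_ -> [->] ->]]]] | _ ->] /=.
- exact: d_refl.
- by have [a uxa] := Ku x Kx; exists x, a, a; rewrite d_refl.
Qed.

Lemma dK_triangle K f u g : K !=set0 ->
  K `<=` pdom f -> K `<=` pdom u -> K `<=` pdom g ->
  has_ubound (dK_values K f u) -> has_ubound (dK_values K u g) ->
  dK d K f g <= dK d K f u + dK d K u g.
Proof.
move=> K0 Kf Ku Kg ub_fu ub_ug; apply: dK_le => // x a b Kx fxa gxb.
have [c uxc] := Ku x Kx.
apply: le_trans (d_triangle a c b) (lerD _ _).
- exact: le_dK ub_fu Kx fxa uxc.
- exact: le_dK ub_ug Kx uxc gxb.
Qed.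

Lemma dK_subset K1 K u g : K1 `<=` K -> K1 !=set0 ->
  K `<=` pdom u -> K `<=` pdom g -> has_ubound (dK_values K u g) ->
  dK d K1 u g <= dK d K u g.
Proof.
move=> K1K K10 Ku Kg ub.
apply: dK_le K10 (subset_trans K1K Ku) (subset_trans K1K Kg) _.
by move=> x a b K1x uxa gxb; exact: le_dK ub (K1K x K1x) uxa gxb.
Qed.

Lemma BK_center K u e : Cod_star d u -> K !=set0 -> K `<=` pdom u -> 0 < e ->
  BK d u K e u.
Proof. by move=> codu K0 Ku e0; split => //; split => //; rewrite dK_id. Qed.

Lemma BK_subset_Cod f K e : BK d f K e `<=` Cod d.
Proof. by move=> g [[]]. Qed.

Lemma BK_in_Bfam f K e : Cod_star d f -> K !=set0 -> compact K ->
  K `<=` pdom f -> 0 < e -> Bfam d (BK d f K e).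
Proof. by move=> *; left; exists f, K, e. Qed.

Lemma BK_subset f u K1 K e1 e : is_cod d f -> compact K1 -> compact K ->
  K1 !=set0 -> K1 `<=` K -> K1 `<=` pdom f -> K `<=` pdom u ->
  BK d f K1 e1 u -> e <= e1 - dK d K1 f u -> BK d u K e `<=` BK d f K1 e1.
Proof.
move=> codf cK1 cK K10 K1K K1f Ku [[codu _] [K1u _]] le_gap g [[codg g0] [Kg ug_e]].
have K1g : K1 `<=` pdom g := subset_trans K1K Kg.
split=> //; split=> //.
have ub := dK_values_ubound.
have tri := dK_triangle K10 K1f K1u K1g (ub _ _ _ codf codu cK1 K1f K1u)
  (ub _ _ _ codu codg cK1 K1u K1g).
have sub := dK_subset K1K K10 Ku Kg (ub _ _ _ codu codg cK Ku Kg).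
rewrite lerBrDl in le_gap.
apply: le_lt_trans tri _; apply: le_lt_trans (lerD (lexx _) sub) _.
by apply: lt_le_trans le_gap; rewrite ltrD2l.
Qed.

Lemma BK_meet f1 K1 e1 f2 K2 e2 u : is_cod d f1 -> is_cod d f2 ->
  K1 !=set0 -> K2 !=set0 -> compact K1 -> compact K2 ->
  K1 `<=` pdom f1 -> K2 `<=` pdom f2 ->
  BK d f1 K1 e1 u -> BK d f2 K2 e2 u ->
  exists2 B, Bfam d B & B u /\ B `<=` BK d f1 K1 e1 `&` BK d f2 K2 e2.
Proof.
move=> codf1 codf2 K10 K20 cK1 cK2 K1f1 K2f2 u1 u2.
have [[codu u0] [K1u gap1]] := u1; have [_ [K2u gap2]] := u2.
set K := K1 `|` K2; set e := Num.min (e1 - dK d K1 f1 u) (e2 - dK d K2 f2 u).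
have K0 : K !=set0 by case: K10 => x K1x; exists x; left.
have cK : compact K := compactU cK1 cK2.
have Ku : K `<=` pdom u by move=> x [/K1u|/K2u].
have e_gt0 : 0 < e by rewrite lt_min !subr_gt0 gap1 gap2.
exists (BK d u K e); first exact: BK_in_Bfam.
split; first exact: BK_center.
move=> g ug; split.
- by apply: BK_subset ug => //; [exact: subsetUl | rewrite ge_min lexx].
- by apply: BK_subset ug => //; [exact: subsetUr | rewrite ge_min lexx orbT].
Qed.

Lemma Bfam_subset_Cod B : Bfam d B -> B `<=` Cod d.
Proof. by move=> [[f [K [e [_ _ _ _ ->]]]] | ->] //; exact: BK_subset_Cod. Qed.

Lemma Bfam_meet B1 B2 u : Bfam d B1 -> Bfam d B2 -> B1 u -> B2 u ->
  exists2 B, Bfam d B & B u /\ B `<=` B1 `&` B2.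
Proof.
case=> [[f1 [K1 [e1 [f1_star [K10 cK1] K1f1 e1_gt0 ->]]]] | ->] B2B u1 u2;
  last by exists B2 => //; split => // g B2g; split => //; exact: Bfam_subset_Cod B2g.
case: B2B u2 => [[f2 [K2 [e2 [f2_star [K20 cK2] K2f2 _ ->]]]] | ->] u2.
  exact: BK_meet f1_star.1 f2_star.1 K10 K20 cK1 cK2 K1f1 K2f2 u1 u2.
exists (BK d f1 K1 e1); first exact: BK_in_Bfam.
by split => // g B1g; split => //; exact: BK_subset_Cod B1g.
Qed.

End CompactOpenDistance.

Theorem mainTheorem4 (R : realType) (X : topologicalType) (Y : Type)
    (d : Y -> Y -> R) (hd : is_metric d) :
  is_basis_on (@Cod R X Y d) (@Bfam R X Y d).
Proof.
split; [exact: Bfam_subset_Cod | | exact: Bfam_meet hd].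
by move=> u Cu; exists (Cod d) => //; right.
Qed.
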